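(* Let $k\ge 2$ be an integer that is not a perfect square. If either (R1) $k$ is prime, or (R2) $k=\alpha^{n}$ with $\alpha$ prime and $n$ odd, then $R_k=\{0,\,k-1\}$ (so $\upsilon=2$), i.e. every solution $(t,\xi)$ of $T_\xi=kT_t$ satisfies $\xi\equiv 0$ or $\xi\equiv k-1 \pmod k$, and both remainders occur.
   Context: For an integer $m\ge 0$, $T_m=m(m+1)/2$ denotes the $m$-th triangular number. For a non-square integer $k\ge 2$, consider the equation $T_\xi=k\,T_t$ in nonnegative integers $t,\xi$. Let $R_k=\{\xi \bmod k : \exists\, t\ge 0 \text{ with } T_\xi=kT_t\}$, the set of least nonnegative remainders modulo $k$ of all $\xi$ occurring in solutions $(t,\xi)$, and $\upsilon=|R_k|$. *)

From mathcomp Require Import all_boot.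
Set Implicit Arguments. Unset Strict Implicit. Unset Printing Implicit Defensive.

Definition tri (m : nat) : nat := (m * m.+1) %/ 2.

Definition in_Rk (k r : nat) : Prop :=
  exists t xi : nat, tri xi = k * tri t /\ xi %% k = r.

Definition is_square (k : nat) : Prop := exists a : nat, k = a * a.

From Stdlib Require Import Reals Lra Psatz ZArith Lia.
From mathcomp Require Import all_boot zify.
Set Implicit Arguments. Unset Strict Implicit. Unset Printing Implicit Defensive.

(* Doubling, the equation reads xi (xi + 1) = k t (t + 1).
   - Only 0 and k - 1 occur: if k = p^n with p prime, then p^n divides one of
     the coprime factors xi and xi + 1, so xi = 0 or xi = -1 (mod k).
   - Both occur: (t, xi) = (0, 0) is a solution, and every solution (x, y),
     y > 0, of the Pell equation x^2 = k y^2 + 1 yields the solution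
     t = y (k y - x), xi = k y (x - y) - 1, for which xi = -1 (mod k).
   The bulk of the file proves that the Pell equation is solvable when k is
   not a square, by the classical argument: Dirichlet's approximation theorem
   (pigeonhole on the fractional parts of q sqrt k, with real arithmetic)
   provides pairs (p, q) of arbitrarily large size with 0 < |p^2 - k q^2| <= 2k;
   two of them share the same norm and are congruent modulo that norm, and
   their Brahmagupta composition divided by the norm solves the Pell equation. *)

Lemma double_tri (m : nat) : 2 * tri m = m * m.+1.
Proof.
by rewrite /tri [2 * _]mulnC divnK // dvdn2 oddM /= andbN.
Qed.

Lemma tri_eq_double (k t xi : nat) :
  tri xi = k * tri t <-> xi * xi.+1 = k * (t * t.+1).
Proof.
rewrite -!double_tri mulnCA; split=> [-> // | /eqP].
by rewrite eqn_pmul2l // => /eqP.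
Qed.

(* A prime power dividing a product of two consecutive (hence coprime) numbers
   divides one of them. *)
Lemma prime_power_dvd_consecutive (p n m : nat) : prime p ->
  p ^ n %| m * m.+1 -> p ^ n %| m \/ p ^ n %| m.+1.
Proof.
move=> p_pr dvd_pn; have [p_m | p_not_m] := boolP (p %| m).
- left; have cop : coprime (p ^ n) m.+1.
    by apply/coprimeXl/(coprime_dvdl p_m)/coprimenS.
  by rewrite -(Gauss_dvdl _ cop).
- right; have cop : coprime (p ^ n) m by rewrite coprimeXl // prime_coprime.
  by rewrite -(Gauss_dvdr _ cop).
Qed.

Lemma mod_pred_of_multiple (k c xi : nat) : 0 < k -> xi.+1 = c * k -> xi %% k = k.-1.
Proof.
move=> k_gt0; case: c => [|c]; first by rewrite mul0n.
rewrite mulSn => xiE.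
have -> : xi = c * k + k.-1 by lia.
by rewrite modnMDl modn_small // prednK.
Qed.

Lemma prime_power_residues (p n xi c : nat) : prime p ->
  xi * xi.+1 = p ^ n * c -> xi %% p ^ n = 0 \/ xi %% p ^ n = (p ^ n).-1.
Proof.
move=> p_pr sol; have pn_gt0 : 0 < p ^ n by rewrite expn_gt0 prime_gt0.
have [dvd_xi | /dvdnP [d xiE]] : p ^ n %| xi \/ p ^ n %| xi.+1.
  by apply: prime_power_dvd_consecutive => //; rewrite sol dvdn_mulr.
- by left; apply/eqP.
- by right; apply: mod_pred_of_multiple xiE.
Qed.

Lemma pigeonhole_seq (T : finType) (c : nat -> T) :
  exists i j, [/\ i < j, j <= #|T| & c i = c j].
Proof.
pose f (i : 'I_#|T|.+1) := c i.
have /injectivePn [i [j ij fij]] : ~~ injectiveb f.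
  by apply/injectiveP => /leq_card; rewrite card_ord ltnn.
have ord_le (m : 'I_#|T|.+1) : m <= #|T| by rewrite -ltnS.
case: (ltngtP i j) => [lt_ij | lt_ji | /val_inj eq_ij]; last by rewrite eq_ij eqxx in ij.
- by exists i, j.
- by exists j, i.
Qed.

Lemma unbounded_collision (A : choiceType) (T : finType) (good : pred A)
    (height : A -> nat) (cls : A -> T) :
  (forall N, exists2 a, good a & N < height a) ->
  exists a b, [/\ good a, good b, a != b & cls a = cls b].
Proof.
move=> unbounded.
have ex N : exists a, good a && (N < height a).
  by have [a ga Na] := unbounded N; exists a; rewrite ga.
pose above N := xchoose (ex N).
have above_spec N : good (above N) /\ N < height (above N).
  exact/andP/(xchooseP (ex N)).
have good_above N := (above_spec N).1; have height_above N := (above_spec N).2.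
pose s := fix s i := if i is i'.+1 then above (height (s i')) else above 0.
have height_incr : {homo (height \o s) : i j / i < j}.
  by apply: homo_ltn => [? ? ? /ltn_trans | i]; [exact | exact: height_above].
have good_s i : good (s i) by case: i => [|i]; apply: good_above.
have [i [j [ij _ eq_cls]]] := pigeonhole_seq (cls \o s).
exists (s i), (s j); split => //.
by apply: contraTneq (height_incr _ _ ij) => /= ->; rewrite ltnn.
Qed.

Lemma isqrt_le (a b : nat) : (b * b <= a) = (b <= Nat.sqrt a).
Proof.
have sq_le := Nat.sqrt_le_square a b.
apply/idP/idP => /leP H; apply/leP.
- by apply/sq_le; lia.
- by move/sq_le: H; lia.
Qed.

Lemma isqrt_bounds (a : nat) :
  Nat.sqrt a * Nat.sqrt a <= a < (Nat.sqrt a).+1 * (Nat.sqrt a).+1.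
Proof. by rewrite isqrt_le leqnn /= ltnNge isqrt_le ltnn. Qed.

(* [floor (sqrt (N^2 m))] is [N floor (sqrt m)] plus a remainder below [N]: it
   encodes the first digit in base [N] of the fractional part of [sqrt m]. *)
Lemma isqrt_scale (N m : nat) : 0 < N ->
  N * Nat.sqrt m <= Nat.sqrt (N * N * m) < N * Nat.sqrt m + N.
Proof.
move=> N_gt0; have /andP[lo hi] := isqrt_bounds m.
rewrite -isqrt_le ltnNge -isqrt_le addnC -mulnS.
apply/andP; split; first by rewrite mulnACA leq_mul2l lo orbT.
by rewrite -ltnNge mulnACA ltn_pmul2l ?muln_gt0 ?N_gt0.
Qed.

Section RealApproximation.
Local Open Scope R_scope.

(* If [|N (q s - p)| < 1] with [s = sqrt k] and [1 <= q <= N], then the norm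
   [p^2 - k q^2 = (p - q s)(p + q s)] is smaller than [2k + 1] in absolute value,
   and if it is nonzero, [p + q s] (hence [p + k q]) exceeds [N]. *)
Lemma approx_norm_bounds (k N p q s : R) :
  s * s = k -> 0 <= s -> 1 <= k -> 1 <= N -> 1 <= q <= N -> 0 <= p ->
  Rabs (N * (q * s - p)) < 1 ->
  Rabs (p * p - k * q * q) < 2 * k + 1 /\
  (1 <= Rabs (p * p - k * q * q) -> N < p + k * q).
Proof.
move=> ss s_ge0 k_ge1 N_ge1 [q_ge1 q_le_N] p_ge0 close.
set e := Rabs (p - q * s).
have e_ge0 : 0 <= e by apply: Rabs_pos.
have Ne_lt1 : N * e < 1.
  have -> : N * e = Rabs (N * (q * s - p)); last exact: close.
  rewrite Rabs_mult (Rabs_right N); last by lra.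
  by rewrite /e -Rabs_Ropp Ropp_minus_distr.
have norm_eq : Rabs (p * p - k * q * q) = e * (p + q * s).
  rewrite -(Rabs_right (p + q * s)); last by nra.
  by rewrite /e -Rabs_mult -ss; congr Rabs; ring.
have sum_le : p + q * s <= e + 2 * (q * s).
  by have := Rle_abs (p - q * s); rewrite -/e; lra.
have s_le_k : s <= k by nra.
have qe_lt1 : q * e < 1 by nra.
have e_lt1 : e < 1 by nra.
split.
- rewrite norm_eq.
  have : e * (p + q * s) <= e * (e + 2 * (q * s)) by apply: Rmult_le_compat_l.
  have : e * e < 1 by nra.
  have : (q * e) * s <= s by nra.
  nra.
- rewrite norm_eq => ge1.
  have sum_gt0 : 0 < p + q * s by nra.
  have : N * e * (p + q * s) < p + q * s by nra.
  have : q * s <= q * k by nra.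
  nra.
Qed.

Lemma isqrt_real_bounds (y : R) (K : nat) : 0 <= y -> y * y = INR K ->
  INR (Nat.sqrt K) <= y < INR (Nat.sqrt K) + 1.
Proof.
move=> y_ge0 yy; have /andP[lo hi] := isqrt_bounds K.
move/leP/le_INR: lo; move/ltP/lt_INR: hi; rewrite !mult_INR S_INR => hi lo.
have := pos_INR (Nat.sqrt K); split; nra.
Qed.

Lemma Rabs_INR_sub_lt (a b c : nat) :
  Rabs (INR a - INR b) < INR c + 1 -> (a <= b + c)%N && (b <= a + c)%N.
Proof.
move=> /Rabs_def2 [lt1 lt2].
by apply/andP; split; rewrite -ltnS; apply/ltP/INR_lt; rewrite S_INR plus_INR; lra.
Qed.

Lemma Rabs_INR_sub_ge1 (a b : nat) : a != b -> 1 <= Rabs (INR a - INR b).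
Proof.
case: ltngtP => // [/leP/le_INR | /leP/le_INR]; rewrite S_INR => lt _.
- by rewrite Rabs_left1; lra.
- by rewrite Rabs_right; lra.
Qed.

(* If the floors of [N i sqrt k] and [N j sqrt k] differ by [N p], then
   [(j - i) sqrt k] is within [1/N] of [p]; hence [(p, j - i)] has norm
   [p^2 - k (j - i)^2] of size at most [2k], and when that norm is nonzero,
   [p + k (j - i)] exceeds [N]. *)
Lemma floor_gap_near_pell (k N i j p : nat) : (0 < k)%N -> (0 < N)%N -> (i < j)%N ->
  (j - i <= N)%N ->
  Nat.sqrt (N * N * (k * (j * j))) = (Nat.sqrt (N * N * (k * (i * i))) + N * p)%N ->
  let q := (j - i)%N in
  [/\ (p * p <= k * (q * q) + 2 * k)%N, (k * (q * q) <= p * p + 2 * k)%N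
    & (p * p != k * (q * q))%N -> (N < p + k * q)%N].
Proof.
move=> k_gt0 N_gt0 ij q_le_N b_ij q.
pose s := sqrt (INR k).
have ss : s * s = INR k by apply/sqrt_sqrt/pos_INR.
have s_ge0 : 0 <= s by apply: sqrt_pos.
have floor x : INR (Nat.sqrt (N * N * (k * (x * x)))) <= INR N * INR x * s
               < INR (Nat.sqrt (N * N * (k * (x * x)))) + 1.
  apply: isqrt_real_bounds; first by apply/Rmult_le_pos/s_ge0/Rmult_le_pos/pos_INR/pos_INR.
  by rewrite !mult_INR -ss; ring.
have [norm_lt norm_large] :
    Rabs (INR p * INR p - INR k * INR q * INR q) < 2 * INR k + 1 /\
    (1 <= Rabs (INR p * INR p - INR k * INR q * INR q) -> INR N < INR p + INR k * INR q).
  have INR_ge1 m : (0 < m)%N -> 1 <= INR m by move=> /leP/le_INR.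
  have Rj : INR j = INR i + INR q by rewrite -plus_INR; congr INR; rewrite /q; lia.
  apply: (approx_norm_bounds ss s_ge0); try exact: INR_ge1.
  - by split; [apply: INR_ge1; rewrite subn_gt0 | apply/le_INR/leP].
  - exact: pos_INR.
  - have := floor i; have := floor j; rewrite b_ij plus_INR mult_INR Rj.
    by move=> *; apply: Rabs_def1; lra.
have R_norm : INR p * INR p - INR k * INR q * INR q = INR (p * p) - INR (k * (q * q)).
  by rewrite !mult_INR; ring.
rewrite R_norm in norm_lt norm_large.
have /andP[lo hi] : (p * p <= k * (q * q) + 2 * k)%N && (k * (q * q) <= p * p + 2 * k)%N.
  have two_k : INR (2 * k) = 2 * INR k by rewrite mult_INR /=; ring.
  by apply: Rabs_INR_sub_lt; rewrite two_k.
split=> // /Rabs_INR_sub_ge1 /norm_large large.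
by apply/ltP/INR_lt; rewrite plus_INR mult_INR.
Qed.

End RealApproximation.

Lemma nonsquare_norm_neq0 (k p q : nat) : ~ is_square k -> 0 < q -> p * p != k * (q * q).
Proof.
move=> nsq q_gt0; apply/eqP => pE; apply: nsq.
have /dvdnP [c pE'] : q %| p by rewrite -(@dvdn_pexp2r _ _ 2) // -!mulnn pE dvdn_mull.
exists c; apply/eqP; rewrite -(eqn_pmul2r (_ : 0 < q * q)) ?muln_gt0 ?q_gt0 //.
by rewrite -pE pE' mulnACA.
Qed.

Definition near_pell (k : nat) (pq : nat * nat) : bool :=
  [&& 0 < pq.2, pq.1 * pq.1 <= k * (pq.2 * pq.2) + 2 * k,
      k * (pq.2 * pq.2) <= pq.1 * pq.1 + 2 * k & pq.1 * pq.1 != k * (pq.2 * pq.2)].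

(* Among
   [q = 0 .. N] two have the same first base-[N] digit of the fractional part
   of [q sqrt k]; their difference is a good approximation. *)
Lemma near_pell_unbounded (k n : nat) : 0 < k -> ~ is_square k ->
  exists2 pq, near_pell k pq & n < pq.1 + k * pq.2.
Proof.
move=> k_gt0 nsq; set N := n.+1.
pose a x := Nat.sqrt (k * (x * x)); pose b x := Nat.sqrt (N * N * (k * (x * x))).
have scale x : N * a x <= b x < N * a x + N by apply: isqrt_scale.
pose box x : 'I_N := inord (b x - N * a x).
have [i [j [ij j_le_N box_ij]]] := pigeonhole_seq box; rewrite card_ord in j_le_N.
have frac_ij : b i - N * a i = b j - N * a j.
  have box_val x : (b x - N * a x) < N by have := scale x; lia.
  by move/(congr1 val): box_ij; rewrite /= !inordK ?box_val.
have a_ij : a i <= a j.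
  have mono : k * (i * i) <= k * (j * j) by rewrite leq_mul2l (leq_mul (ltnW ij) (ltnW ij)) orbT.
  rewrite {2}/a -isqrt_le (leq_trans _ mono) //.
  exact: (proj1 (andP (isqrt_bounds _))).
set p := a j - a i; set q := j - i.
have b_ij : b j = b i + N * p.
  have := leq_mul (leqnn N) a_ij; have := scale i; have := scale j; rewrite /p mulnBr; lia.
have q_gt0 : 0 < q by rewrite subn_gt0.
have q_le_N : q <= N by rewrite /q; lia.
have [lo hi large] := floor_gap_near_pell k_gt0 (ltn0Sn n) ij q_le_N b_ij.
have norm_neq0 := nonsquare_norm_neq0 p nsq q_gt0.
by exists (p, q); [apply/and4P | exact/ltnW/large].
Qed.

Section Composition.
Local Open Scope Z_scope.

(* Two distinct pairs of the same nonzero norm [d], congruent modulo [d]: the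
   Brahmagupta product [(p1 + q1 sqrt k)(p2 - q2 sqrt k)] is divisible by [d],
   and the quotient is a nontrivial solution of [x^2 - k y^2 = 1]. *)
Lemma pell_of_congruent_pairs (k p1 q1 p2 q2 d : Z) : d <> 0 ->
  p1 * p1 - k * q1 * q1 = d -> p2 * p2 - k * q2 * q2 = d ->
  (d | p1 - p2) -> (d | q1 - q2) -> 0 < q1 -> 0 < q2 -> (p1, q1) <> (p2, q2) ->
  exists x y, y <> 0 /\ x * x - k * y * y = 1.
Proof.
move=> d_neq0 norm1 norm2 [u pu] [w qw] q1_gt0 q2_gt0 pairs_neq.
have p1E : p1 = p2 + d * u by lia.
have q1E : q1 = q2 + d * w by lia.
pose x := 1 + u * p2 - k * w * q2; pose y := u * q2 - w * p2.
have xE : p1 * p2 - k * q1 * q2 = d * x.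
  have -> : p1 * p2 - k * q1 * q2 = (p2 * p2 - k * q2 * q2) + d * (u * p2 - k * w * q2).
    by rewrite p1E q1E; ring.
  by rewrite norm2 /x; ring.
have yE : p1 * q2 - p2 * q1 = d * y by rewrite /y p1E q1E; ring.
have brahmagupta : (p1 * p2 - k * q1 * q2) * (p1 * p2 - k * q1 * q2)
    - k * (p1 * q2 - p2 * q1) * (p1 * q2 - p2 * q1)
    = (p1 * p1 - k * q1 * q1) * (p2 * p2 - k * q2 * q2) by ring.
rewrite norm1 norm2 xE yE in brahmagupta.
exists x, y; split.
- move=> y0; rewrite y0 Z.mul_0_r in yE.
  have cross : p1 * q2 = p2 * q1 by lia.
  have : d * (q2 * q2) = d * (q1 * q1).
    rewrite -{1}norm1 -norm2.
    have -> : (p1 * p1 - k * q1 * q1) * (q2 * q2) = (p1 * q2) * (p1 * q2) - k * (q1 * q2) * (q1 * q2)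
      by ring.
    by rewrite cross; ring.
  move/(Z.mul_reg_l _ _ _ d_neq0) => qq.
  have factored : (q1 - q2) * (q1 + q2) = 0.
    have -> : (q1 - q2) * (q1 + q2) = q1 * q1 - q2 * q2 by ring.
    by rewrite qq; ring.
  have q12 : q1 = q2 by case/Z.mul_eq_0: factored; lia.
  apply: pairs_neq; rewrite q12; congr pair.
  by apply: (Z.mul_reg_r _ _ q2); [lia | rewrite cross q12].
- apply: (Z.mul_reg_l _ _ (d * d)); first by apply/Z.neq_mul_0.
  by rewrite Z.mul_1_r -[RHS]brahmagupta; ring.
Qed.

End Composition.

Definition znorm (k : nat) (pq : nat * nat) : Z :=
  (Z.of_nat (pq.1 * pq.1) - Z.of_nat (k * (pq.2 * pq.2)))%Z.

(* A finite classification of near-Pell pairs: their norm (shifted by [2k]) and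
   their components modulo [(2k)!], a common multiple of all possible norms. *)
Definition pell_class (k : nat) (pq : nat * nat) :
    'I_(4 * k).+1 * 'I_((2 * k)`!).+1 * 'I_((2 * k)`!).+1 :=
  (inord (pq.1 * pq.1 + 2 * k - k * (pq.2 * pq.2)),
   inord (pq.1 %% (2 * k)`!), inord (pq.2 %% (2 * k)`!)).

Lemma mod_eq_Zdivide (m a b : nat) :
  a %% m = b %% m -> (Z.of_nat m | Z.of_nat a - Z.of_nat b)%Z.
Proof.
move=> ab; exists (Z.of_nat (a %/ m) - Z.of_nat (b %/ m))%Z.
have := divn_eq a m; have := divn_eq b m; lia.
Qed.

Lemma pell_class_eq (k : nat) (a b : nat * nat) :
  near_pell k a -> near_pell k b -> pell_class k a = pell_class k b ->
  [/\ znorm k a = znorm k b, (znorm k a | Z.of_nat a.1 - Z.of_nat b.1)%Z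
    & (znorm k a | Z.of_nat a.2 - Z.of_nat b.2)%Z].
Proof.
have shift_bound (p q : nat) : p * p <= k * (q * q) + 2 * k ->
    k * (q * q) <= p * p + 2 * k -> p * p + 2 * k - k * (q * q) < (4 * k).+1.
  by move=> *; lia.
have fact_bound x : x %% (2 * k)`! < ((2 * k)`!).+1 by rewrite ltnS ltnW ?ltn_pmod ?fact_gt0.
case: a b => [p1 q1] [p2 q2]; rewrite /near_pell /znorm /=.
move=> /and4P[_ lo1 hi1 neq1] /and4P[_ lo2 hi2 neq2].
case=> /(congr1 val) eq_norm /(congr1 val) eq_p /(congr1 val) eq_q.
rewrite /= !inordK ?fact_bound ?shift_bound // in eq_norm eq_p eq_q.
pose m := Z.abs_nat (Z.of_nat (p1 * p1) - Z.of_nat (k * (q1 * q1))).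
have m_dvd : m %| (2 * k)`! by apply: dvdn_fact; rewrite /m; clear -lo1 hi1 neq1; lia.
have abs_m : Z.abs (Z.of_nat (p1 * p1) - Z.of_nat (k * (q1 * q1))) = Z.of_nat m.
  by rewrite /m; clear; lia.
have mod_m x y : x = y %[mod (2 * k)`!] -> x = y %[mod m].
  by rewrite -(modn_dvdm x m_dvd) -(modn_dvdm y m_dvd) => ->.
split; first by clear -eq_norm lo1 hi1 lo2 hi2; lia.
all: apply/Z.divide_abs_l; rewrite abs_m; apply/mod_eq_Zdivide/mod_m; assumption.
Qed.

Lemma pell_solvable (k : nat) : 0 < k -> ~ is_square k ->
  exists x y, 0 < y /\ x * x = k * (y * y) + 1.
Proof.
move=> k_gt0 nsq.
have [[p1 q1] [[p2 q2] [good1 good2 neq cls_eq]]] :=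
  @unbounded_collision _ _ (near_pell k) (fun pq => pq.1 + k * pq.2) (pell_class k)
    (fun n => near_pell_unbounded n k_gt0 nsq).
have [norm_eq dvd_p dvd_q] := pell_class_eq good1 good2 cls_eq.
move: good1 good2 dvd_p dvd_q; rewrite /near_pell /=.
move=> /and4P[q1_gt0 _ _ neq1] /and4P[q2_gt0 _ _ _] dvd_p dvd_q.
have norm_neq0 : znorm k (p1, q1) <> 0%Z by rewrite /znorm /=; lia.
have norm1 : (Z.of_nat p1 * Z.of_nat p1 - Z.of_nat k * Z.of_nat q1 * Z.of_nat q1
              = znorm k (p1, q1))%Z by rewrite /znorm /=; lia.
have norm2 : (Z.of_nat p2 * Z.of_nat p2 - Z.of_nat k * Z.of_nat q2 * Z.of_nat q2
              = znorm k (p1, q1))%Z by rewrite norm_eq /znorm /=; lia.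
have pairs_neq : (Z.of_nat p1, Z.of_nat q1) <> (Z.of_nat p2, Z.of_nat q2).
  by case=> /Nat2Z.inj e1 /Nat2Z.inj e2; move: neq; rewrite e1 e2 eqxx.
have [x [y [y_neq0 pellZ]]] := pell_of_congruent_pairs norm_neq0 norm1 norm2 dvd_p dvd_q
  (inj_lt 0 q1 (elimTF ltP q1_gt0)) (inj_lt 0 q2 (elimTF ltP q2_gt0)) pairs_neq.
by exists (Z.abs_nat x), (Z.abs_nat y); split; lia.
Qed.

Lemma pell_triangular (k x y : nat) : 2 <= k -> 0 < y -> x * x = k * (y * y) + 1 ->
  let t := y * (k * y - x) in let xi := (k * y * (x - y)).-1 in
  xi * xi.+1 = k * (t * t.+1).
Proof.
move=> k_ge2 y_gt0 pellE t xi.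
have yy_le : 2 * (y * y) <= k * (y * y) by rewrite leq_mul2r k_ge2 orbT.
have yx : y < x.
  rewrite ltnNge; apply/negP => xy; have := leq_mul xy xy; lia.
have xky : x <= k * y.
  rewrite leqNgt; apply/negP => kyx; have := leq_mul kyx kyx.
  have : k * (y * y) <= k * y * (k * y) by nia.
  lia.
set a := x - y; set c := k * y - x; set K := k * y.
have xE : x = y + a by lia.
have KE : K = y + a + c by rewrite /K; lia.
have pellE' : a * (y + a) = c * y + 1.
  have : x * x = K * y + 1 by rewrite /K -mulnA.
  rewrite {1 2}xE KE; nia.
have key : a * (K * a) = a + c * (y * c).+1.
  have := congr1 (muln (a + c)) pellE'; rewrite KE; nia.
have Ka_gt0 : 0 < K * a by rewrite muln_gt0; apply/andP; split; lia.
rewrite /xi -/a -/K prednK // /t -/c.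
have aX : a * (K * a).-1 = c * (y * c).+1.
  by move: key; rewrite -{1}(prednK Ka_gt0) mulnS; lia.
have := congr1 (muln K) aX; rewrite /K; lia.
Qed.

Lemma pred_residue_occurs (k : nat) : 2 <= k -> ~ is_square k ->
  exists t xi, tri xi = k * tri t /\ xi %% k = k.-1.
Proof.
move=> k_ge2 nsq; have [x [y [y_gt0 pellE]]] := pell_solvable (ltnW k_ge2) nsq.
have sol := pell_triangular k_ge2 y_gt0 pellE.
exists (y * (k * y - x)), (k * y * (x - y)).-1; split; first exact/tri_eq_double.
have prod_gt0 : 0 < k * y * (x - y).
  by rewrite !muln_gt0 y_gt0 subn_gt0 (ltnW k_ge2); nia.
apply: (mod_pred_of_multiple (c := y * (x - y))); first exact: ltnW.
by rewrite prednK // [RHS]mulnC mulnA.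
Qed.

Theorem proposition2 (k : nat) :
  2 <= k -> ~ is_square k ->
  (prime k \/ exists alpha n : nat, prime alpha /\ odd n /\ k = alpha ^ n) ->
  forall r : nat, in_Rk k r <-> (r = 0 \/ r = k.-1).
Proof.
move=> k_ge2 nsq k_prime_power r; split.
- case=> t [xi [/tri_eq_double sol <-]].
  have [p [n [p_pr kE]]] : exists p n, prime p /\ k = p ^ n.
    case: k_prime_power => [k_pr | [p [n [p_pr [_ kE]]]]]; last by exists p, n.
    by exists k, 1; rewrite expn1.
  by rewrite kE in sol *; apply: prime_power_residues sol.
- case=> ->; last exact: pred_residue_occurs.
  by exists 0, 0; rewrite /tri mul0n div0n muln0 mod0n.
Qed.
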